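(* Let $(a_{n,k})_{n,k\ge 1}$ be complex numbers such that every series of the form $\sum_{n=1}^{\infty}\prod_{j=1}^{m}a_{n,k_j}$ (with $m\in\mathbb{N}$, $k_1,\dots,k_m\in\mathbb{N}$) converges. Let $m\in\mathbb{N}$, $k_1,\dots,k_m\in\mathbb{N}$ and $L=[k_1,\dots,k_m]$. Then $$\sum_{\substack{n_1,\dots,n_m\ge 1\\ \text{pairwise distinct}}}\ \prod_{j=1}^{m}a_{n_j,k_j}=\sum_{\sigma\in S_m}\operatorname{sign}(\sigma)\,\mathbb{A}_{\sigma,L}.$$
   Context: $S_m$ is the symmetric group on $\{1,\dots,m\}$ and $\operatorname{sign}(\sigma)$ the sign of a permutation. For $\sigma\in S_m$, write $\sigma$ as a product of disjoint cycles $C_1,\dots,C_{r}$, where fixed points are kept as cycles of length one (so the cycles partition $\{1,\dots,m\}$). Then $$\mathbb{A}_{\sigma,L}:=\prod_{t=1}^{r}\Big(\sum_{n=1}^{\infty}\prod_{i\in C_t}a_{n,k_i}\Big).$$ For example, for $\sigma=(1\,2\,4)(3\,6)(5)\in S_6$, $\mathbb{A}_{\sigma,L}=\big(\sum_n a_{n,k_1}a_{n,k_2}a_{n,k_4}\big)\big(\sum_n a_{n,k_3}a_{n,k_6}\big)\big(\sum_n a_{n,k_5}\big)$. *)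

From HB Require Import structures.
From mathcomp Require Import all_boot all_order all_algebra all_fingroup.
From mathcomp Require Import all_classical all_reals all_analysis.
From mathcomp Require Import complex.
Set Implicit Arguments. Unset Strict Implicit. Unset Printing Implicit Defensive.
Import Order.TTheory GRing.Theory Num.Theory.
Import numFieldTopology.Exports numFieldNormedType.Exports.
Local Open Scope classical_set_scope.
Local Open Scope ring_scope.

(* Complex numbers: R[i] for R a realType; topology = the one induced by the
   norm of the numClosedFieldType R[i]. Indices n, k start at 1. *)

Definition psum (C : numFieldType) (f : nat -> C) (N : nat) : C :=
  \sum_(1 <= n < N.+1) f n.

Definition series_converges (C : numFieldType) (f : nat -> C) : Prop :=
  cvg (psum f @ \oo).

Definition series_value (C : numFieldType) (f : nat -> C) : C :=
  lim (psum f @ \oo).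

(* A_{sigma,L} = prod over the cycles of sigma (fixed points included, these
   are the orbits of sigma) of sum_n prod_{i in cycle} a_{n,k_i} *)
Definition Asigma (C : numFieldType) (m : nat) (a : nat -> nat -> C)
  (k : 'I_m -> nat) (s : 'S_m) : C :=
  \prod_(Cy in porbits s) series_value (fun n => \prod_(i in Cy) a n (k i)).

(* truncated distinct sum: over pairwise distinct n_1..n_m in {1..N}
   (encoded as injective f : 'I_m -> 'I_N, n_j = f j + 1) *)
Definition distinct_psum (C : numFieldType) (m : nat) (a : nat -> nat -> C)
  (k : 'I_m -> nat) (N : nat) : C :=
  \sum_(f : {ffun 'I_m -> 'I_N} | injectiveb f) \prod_(j < m) a (f j).+1 (k j).

From HB Require Import structures.
From mathcomp Require Import all_boot all_order all_algebra all_fingroup.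
From mathcomp Require Import all_classical all_reals all_analysis.
From mathcomp Require Import complex.
Set Implicit Arguments.
Unset Strict Implicit.
Unset Printing Implicit Defensive.
Import Order.TTheory GRing.Theory Num.Theory.
Import numFieldTopology.Exports numFieldNormedType.Exports.
Local Open Scope classical_set_scope.
Local Open Scope ring_scope.

(* Fix a truncation level N. Expanding the product over the cycles of sigma,
   prod_C sum_(n <= N) prod_(i in C) a_(n,k_i) is the sum of prod_j a_(g j, k_j)
   over the maps g : {1..m} -> {1..N} constant on the cycles, i.e. with
   g o sigma = g. Exchanging the sums over sigma and g, each g gets weighted by
   the signed count of the permutations fixing it. That is 1 for injective g
   and 0 otherwise, because a non-injective g is fixed by a transposition,
   whose left multiplication exchanges the even and odd stabilizers of g. So
   the identity holds exactly for every N, and letting N -> oo termwise gives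
   the theorem, each cycle series converging by hypothesis. *)

Definition stabilizes {X T : finType} (s : {perm X}) (g : {ffun X -> T}) :=
  [forall i, g (s i) == g i].

Section PorbitExpansion.
Variables (X T : finType) (s : {perm X}).

Lemma stabilizes_porbit (g : {ffun X -> T}) y z :
  stabilizes s g -> y \in porbit s z -> g y = g z.
Proof.
move=> /forallP sg /porbitP [n ->]; elim: n => [|n IHn].
  by rewrite expg0 perm1.
by rewrite expgSr permM (eqP (sg _)).
Qed.

Lemma porbit_porbits {Cy i} : Cy \in porbits s -> i \in Cy -> porbit s i = Cy.
Proof. by case/imsetP=> y _ -> iy; apply/eqP; rewrite eq_porbit_mem. Qed.

Lemma stabilizes_ffun_porbit (F : {ffun {set X} -> T}) :
  stabilizes s [ffun i => F (porbit s i)].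
Proof.
by apply/forallP=> i; rewrite !ffunE -[s i]/((s ^+ 1)%g i) porbit_perm.
Qed.

Lemma expand_porbits (C : comPzSemiRingType) (t0 : T) (x : X -> T -> C) :
  \prod_(Cy in porbits s) \sum_(t : T) \prod_(i in Cy) x i t =
  \sum_(g : {ffun X -> T} | stabilizes s g) \prod_i x i (g i).
Proof.
rewrite (big_distr_big_dep t0) /=.
pose of_orbits (F : {ffun {set X} -> T}) := [ffun i => F (porbit s i)].
pose to_orbits (g : {ffun X -> T}) := [ffun Cy : {set X} =>
  if Cy \in porbits s then
    if [pick y in Cy] is Some y then g y else t0
  else t0].
rewrite (reindex_onto of_orbits to_orbits) => [|g sg]; last first.
  apply/ffunP=> i; rewrite !ffunE imset_f //.
  case: pickP => [y yi|/(_ i)]; last by rewrite porbit_id.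
  exact: stabilizes_porbit sg yi.
apply: eq_big => [F|F _].
  rewrite stabilizes_ffun_porbit /=; apply/familyP/eqP => [FP|<-]; last first.
    by move=> Cy; rewrite !ffunE /=; case: ifP; rewrite ?inE.
  apply/ffunP=> Cy; rewrite !ffunE; have := FP Cy.
  case: (boolP (Cy \in porbits s)) => [CyP _ | _ /eqP -> //].
  case: pickP => [y yC|]; first by rewrite ffunE (porbit_porbits CyP yC).
  by case/imsetP: CyP => y _ -> /(_ y); rewrite porbit_id.
rewrite (partition_big (porbit s) (mem (porbits s))) /=; last first.
  by move=> i _; apply: imset_f.
apply: eq_bigr => Cy CyP; apply: eq_big => [i|i iC].
  by apply/idP/eqP => [iC|<-]; [apply: porbit_porbits | apply: porbit_id].
by rewrite ffunE (porbit_porbits CyP iC).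
Qed.
End PorbitExpansion.

Lemma sum_sign_stabilizers (C : numDomainType) (X T : finType)
    (g : {ffun X -> T}) :
  \sum_(s : {perm X} | stabilizes s g) ((-1) ^+ s : C) = (injectiveb g)%:R.
Proof.
have [/injectiveP g_inj | /injectivePn [i [j nij gij]]] := boolP (injectiveb g).
  rewrite (big_pred1 1%g) ?odd_perm1 // => s; apply/forallP/eqP => [sg | ->].
    by apply/permP => i; rewrite perm1; apply/g_inj/eqP.
  by move=> i; rewrite perm1.
have g_tperm y : g (tperm i j y) = g y by case: tpermP => // ->.
set S := \sum_(s | _) _.
suff : S = - S by move/eqP; rewrite -subr_eq0 opprK -mulr2n mulrn_eq0 => /eqP.
rewrite {1}/S (reindex_inj (mulIg (tperm i j))) -sumrN /=.
apply: eq_big => [s|s _].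
  by apply: eq_forallb => y; rewrite permM g_tperm.
by rewrite odd_permM odd_tperm nij signr_addb mulrN1.
Qed.

Lemma sum_injective_ffun_porbits (C : numDomainType) (X T : finType) (t0 : T)
    (x : X -> T -> C) :
  \sum_(g : {ffun X -> T} | injectiveb g) \prod_i x i (g i) =
  \sum_(s : {perm X}) (-1) ^+ s *
    \prod_(Cy in porbits s) \sum_(t : T) \prod_(i in Cy) x i t.
Proof.
under [RHS]eq_bigr => s _ do
  rewrite (expand_porbits s t0) big_distrr big_mkcond /=.
rewrite exchange_big /= [LHS]big_mkcond /=; apply: eq_bigr => g _.
rewrite -big_mkcond -big_distrl /= sum_sign_stabilizers.
by case: (injectiveb g); rewrite ?mul1r ?mul0r.
Qed.

Lemma psumSE (C : numFieldType) (f : nat -> C) N :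
  psum f N.+1 = \sum_(n < N.+1) f n.+1.
Proof. by rewrite /psum big_add1 big_mkord. Qed.

Lemma distinct_psumSE (C : numFieldType) m (a : nat -> nat -> C)
    (k : 'I_m -> nat) N :
  distinct_psum a k N.+1 = \sum_(s : 'S_m) (-1) ^+ s *
    \prod_(Cy in porbits s) psum (fun n => \prod_(i in Cy) a n (k i)) N.+1.
Proof.
rewrite /distinct_psum
  (sum_injective_ffun_porbits ord0 (fun j (n : 'I_N.+1) => a n.+1 (k j))).
apply: eq_bigr => s _; congr (_ * _); apply: eq_bigr => Cy _.
by rewrite psumSE.
Qed.

Lemma series_converges_prod_set (C : numFieldType) (a : nat -> nat -> C)
    (hconv : forall (p : nat) (l : 'I_p -> nat), (0 < p)%N ->
       (forall j, (0 < l j)%N) ->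
       series_converges (fun n => \prod_(j < p) a n (l j)))
    m (k : 'I_m -> nat) (hk : forall j, (0 < k j)%N) (A : {set 'I_m}) :
  (0 < #|A|)%N -> series_converges (fun n => \prod_(i in A) a n (k i)).
Proof.
move=> A_gt0; under eq_fun => n do rewrite big_enum_val.
exact: hconv.
Qed.

Lemma cvg_psumS (C : numFieldType) (f : nat -> C) :
  series_converges f -> (fun N => psum f N.+1) @ \oo --> series_value f.
Proof. by move=> cf; rewrite (cvg_shiftS (psum f)). Qed.

Theorem mainTheorem1 (R : realType) (a : nat -> nat -> R[i])
  (hconv : forall (p : nat) (l : 'I_p -> nat), (0 < p)%N ->
     (forall j, (0 < l j)%N) ->
     series_converges (fun n => \prod_(j < p) a n (l j)))
  (m : nat) (k : 'I_m -> nat) (hm : (0 < m)%N) (hk : forall j, (0 < k j)%N) :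
  distinct_psum a k @ \oo -->
    \sum_(s : 'S_m) (-1) ^+ s * Asigma a k s.
Proof.
rewrite -cvg_shiftS; under eq_cvg do rewrite /= distinct_psumSE.
apply: cvg_big => [|s _]; first exact: add_continuous.
apply: cvgM; first exact: cvg_cst.
apply: cvg_big => [|Cy CyP]; first exact: mul_continuous.
apply/cvg_psumS/series_converges_prod_set => //.
by case/imsetP: CyP => i _ ->; apply/card_gt0P; exists i; apply: porbit_id.
Qed.
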